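(* Consider the sub-$\ell^\infty$ structure on $\mathbb{R}^2$ defined by $X_1=\partial_x$, $X_2=x\partial_y$. A regular bang-bang trajectory with more than $3$ arcs is not a time-minimizer. If, moreover, a regular bang-bang trajectory $\gamma$ starts on the $y$-axis (i.e. $\gamma(0)\in\{x=0\}$) and is a time-minimizer, then it has at most $2$ arcs.
   Context: Sub-$\ell^\infty$ structure defined by smooth vector fields $X_1,\dots,X_k$ on a manifold $M$: an admissible trajectory is an absolutely continuous curve $\gamma:[0,T]\to M$ together with a measurable control $u=(u_1,\dots,u_k):[0,T]\to\mathbb{R}^k$ with $|u_i(t)|\le1$ for all $i$ and a.e. $t$, such that $\dot\gamma(t)=\sum_i u_i(t)X_i(\gamma(t))$ for a.e. $t$. It is a time-minimizer (optimal) if no admissible trajectory joins $\gamma(0)$ to $\gamma(T)$ in time less than $T$. An extremal pair is a pair $(\lambda,\gamma)$ where $\gamma$ is admissible with control $u$ and $\lambda:[0,T]\to T^*M$ is absolutely continuous with $\lambda(t)\in T^*_{\gamma(t)}M\setminus\{0\}$, such that, with $\mathcal H(\lambda,p,u)=\sum_i u_i\langle\lambda,X_i(p)\rangle$, in canonical coordinates $\dot\lambda=-\partial_p\mathcal H(\lambda,\gamma,u)$, $\dot\gamma=\partial_\lambda\mathcal H(\lambda,\gamma,u)$ a.e., and there is a constant $\lambda_0\ge0$ with $\sum_iu_i(t)\langle\lambda(t),X_i(\gamma(t))\rangle=\sum_i|\langle\lambda(t),X_i(\gamma(t))\rangle|=\lambda_0$ for a.e. $t$; $\gamma$ is then an extremal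 trajectory and $\lambda$ an extremal lift. The switching functions are $\varphi_j(t)=\langle\lambda(t),X_j(\gamma(t))\rangle$. The restriction of an extremal pair to an open interval $I$ is a regular arc if $\varphi_j(t)\ne0$ for all $t\in I$ and all $j$; arcs are taken maximal (not contained in a strictly larger open interval with the same property). A regular bang-bang trajectory is an extremal trajectory with an extremal lift such that $[0,T]$ minus finitely many points is a finite union of maximal regular arcs (on each of which the control is then constant with values in $\{1,-1\}^k$); these are its arcs. *)

From Stdlib Require Import Reals List.
Open Scope R_scope.

Definition open_set (O : R -> Prop) : Prop :=
  forall t, O t -> exists r, 0 < r /\ forall s, Rabs (s - t) < r -> O s.

Definition outer_le (S : R -> Prop) (c : R) : Prop :=
  forall eps, 0 < eps ->
    exists a b : nat -> R,
      (forall n, a n <= b n) /\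
      (forall t, S t -> exists n, a n < t < b n) /\
      (forall n, sum_f_R0 (fun k => b k - a k) n <= c + eps).

Definition null_set (S : R -> Prop) : Prop := outer_le S 0.

(* Lebesgue measurable set (outer regularity characterisation) *)
Definition lebesgue_measurable (E : R -> Prop) : Prop :=
  forall eps, 0 < eps ->
    exists O : R -> Prop, open_set O /\ (forall t, E t -> O t) /\
      outer_le (fun t => O t /\ ~ E t) eps.

Definition measurable_on (T : R) (u : R -> R) : Prop :=
  forall alpha, lebesgue_measurable (fun t => 0 <= t <= T /\ u t < alpha).

Definition ae_on (T : R) (P : R -> Prop) : Prop :=
  exists N : R -> Prop, null_set N /\ forall t, 0 <= t <= T -> ~ N t -> P t.

(* finite families of non-overlapping subintervals [a_i,b_i] of [lo,hi], in order *)
Fixpoint chain (lo : R) (l : list (R * R)) (hi : R) : Prop :=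
  match l with
  | nil => lo <= hi
  | (a, b) :: r => lo <= a /\ a <= b /\ chain b r hi
  end.

Definition sum_len (l : list (R * R)) : R :=
  fold_right (fun ab s => (snd ab - fst ab) + s) 0 l.

Definition sum_var (f : R -> R) (l : list (R * R)) : R :=
  fold_right (fun ab s => Rabs (f (snd ab) - f (fst ab)) + s) 0 l.

Definition abs_cont_on (T : R) (f : R -> R) : Prop :=
  forall eps, 0 < eps -> exists delta, 0 < delta /\
    forall l, chain 0 l T -> sum_len l < delta -> sum_var f l < eps.

Definition admissible (T : R) (x y u1 u2 : R -> R) : Prop :=
  0 <= T /\
  abs_cont_on T x /\ abs_cont_on T y /\
  measurable_on T u1 /\ measurable_on T u2 /\
  ae_on T (fun t => Rabs (u1 t) <= 1 /\ Rabs (u2 t) <= 1) /\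
  (* gamma' = u1 X1(gamma) + u2 X2(gamma), X1 = (1,0), X2 = (0,x) *)
  ae_on T (fun t => 0 < t < T ->
     derivable_pt_lim x t (u1 t * 1 + u2 t * 0) /\
     derivable_pt_lim y t (u1 t * 0 + u2 t * x t)).

Definition time_minimizer (T : R) (x y : R -> R) : Prop :=
  forall (T' : R) (x' y' v1 v2 : R -> R),
    admissible T' x' y' v1 v2 ->
    x' 0 = x 0 -> y' 0 = y 0 -> x' T' = x T -> y' T' = y T ->
    T <= T'.

(* Covector lambda = (p,q) in T*_gamma R^2.
   Switching functions: phi1 = <lambda, X1> = p, phi2 = <lambda, X2> = q x. *)
Definition phi1 (p : R -> R) (t : R) : R := p t.
Definition phi2 (x q : R -> R) (t : R) : R := q t * x t.

(* H(lambda, (x,y), u) = u1 p + u2 q x ;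
   lambda' = - d_(x,y) H = (- u2 q, 0), gamma' = d_lambda H = (u1, u2 x). *)
Definition extremal (T : R) (x y u1 u2 p q : R -> R) : Prop :=
  admissible T x y u1 u2 /\
  abs_cont_on T p /\ abs_cont_on T q /\
  (forall t, 0 <= t <= T -> ~ (p t = 0 /\ q t = 0)) /\
  ae_on T (fun t => 0 < t < T ->
     derivable_pt_lim p t (- (u2 t * q t)) /\
     derivable_pt_lim q t (- 0)) /\
  exists l0, 0 <= l0 /\
    ae_on T (fun t =>
      u1 t * phi1 p t + u2 t * phi2 x q t = l0 /\
      Rabs (phi1 p t) + Rabs (phi2 x q t) = l0).

Definition regular_on (x p q : R -> R) (a b : R) : Prop :=
  forall t, a < t < b -> phi1 p t <> 0 /\ phi2 x q t <> 0.

Definition maximal_regular_arc (T : R) (x p q : R -> R) (a b : R) : Prop :=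
  0 <= a /\ a < b /\ b <= T /\ regular_on x p q a b /\
  forall c d, 0 <= c -> c <= a -> b <= d -> d <= T -> (c, d) <> (a, b) ->
    ~ regular_on x p q c d.

Definition regular_bang_bang (T : R) (x y u1 u2 p q : R -> R)
    (arcs : list (R * R)) : Prop :=
  extremal T x y u1 u2 p q /\
  NoDup arcs /\
  Forall (fun ab => maximal_regular_arc T x p q (fst ab) (snd ab)) arcs /\
  exists F : list R, forall t, 0 <= t <= T ->
    In t F \/ exists ab, In ab arcs /\ fst ab < t < snd ab.

(* Along an extremal the covector component [q] is a constant [c] and the Hamiltonian
   [|p| + |c| |x|] is a constant [l0], so [|x| <= A := l0 / |c|] throughout.  On a regular arc
   [u1 = sign p] is constant, so [x] has slope [+1] or [-1]; at an end of a maximal arc inside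
   [(0, T)] either [p] or [x] vanishes, and [|x| = A] where [p] vanishes.  Hence an arc ending
   before [T] and starting after [0] or on the [y]-axis is full: [|x|] runs between [0] and [A] in
   time [A].  On a full arc [|y'| <= |x|] lets [y] gain only [A^2/2] instead of [A^2], so two full
   arcs give [|y(T) - y(0)| <= A T - A^2 < (T - e)^2 / 4] for some [e > 0]; a tent-shaped
   competitor ([x] with unit slope turning once, [y' = lam |x|]) then joins the same endpoints in
   time [T - e].  Distinct maximal arcs are disjoint, so at most one starts at [0] and at most one
   ends at [T]: more than three arcs, or more than two when [x(0) = 0], yield two full arcs. *)

From Stdlib Require Import Reals Lra Lia List Classical.
Open Scope R_scope.

(** * Absolute continuity, null sets and measurability *)

Lemma Rabs_le_bounds x y : Rabs x <= y -> - y <= x <= y.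
Proof. unfold Rabs. destruct (Rcase_abs x); lra. Qed.

Lemma chain_widen l lo hi lo' hi' :
  chain lo l hi -> lo' <= lo -> hi <= hi' -> chain lo' l hi'.
Proof.
  revert lo hi lo' hi'.
  induction l as [|[u v] r IH]; simpl; intros lo hi lo' hi' H Hlo Hhi; [lra|].
  destruct H as [H1 [H2 H3]]. split; [lra|split; [lra|]]. eapply IH; eauto; lra.
Qed.

Lemma chain_le l lo hi : chain lo l hi -> lo <= hi.
Proof.
  revert lo; induction l as [|[u v] r IH]; simpl; intros lo H; [lra|].
  destruct H as [H1 [H2 H3]]. apply IH in H3. lra.
Qed.

Lemma sum_len_ge_0 l lo hi : chain lo l hi -> 0 <= sum_len l.
Proof.
  revert lo; induction l as [|[u v] r IH]; simpl; intros lo H; [lra|].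
  destruct H as [H1 [H2 H3]]. apply IH in H3. lra.
Qed.

Definition lipschitz_on (a b M : R) (f : R -> R) : Prop :=
  forall s t, a <= s <= b -> a <= t <= b -> Rabs (f s - f t) <= M * Rabs (s - t).

Lemma sum_var_le_lipschitz f M a b l lo hi :
  lipschitz_on a b M f -> chain lo l hi -> a <= lo -> hi <= b -> sum_var f l <= M * sum_len l.
Proof.
  intros Hf. revert lo.
  induction l as [|[u v] r IH]; simpl; intros lo Hc Ha Hb; [lra|].
  destruct Hc as [H1 [H2 H3]]. pose proof (chain_le _ _ _ H3).
  specialize (IH v H3 ltac:(lra) Hb).
  assert (Rabs (f v - f u) <= M * (v - u)).
  { rewrite <- (Rabs_right (v - u)) by lra. apply Hf; lra. }
  lra.
Qed.

Lemma sum_var_affine_le f m k l lo hi : chain lo l hi ->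
  sum_var (fun s => m * f s + k * s) l <= Rabs m * sum_var f l + Rabs k * sum_len l.
Proof.
  revert lo; induction l as [|[u v] r IH]; simpl; intros lo Hc; [lra|].
  destruct Hc as [H1 [H2 H3]]. specialize (IH _ H3).
  replace (m * f v + k * v - (m * f u + k * u)) with (m * (f v - f u) + k * (v - u)) by ring.
  pose proof (Rabs_triang (m * (f v - f u)) (k * (v - u))).
  rewrite !Rabs_mult, (Rabs_right (v - u)) in H by lra.
  lra.
Qed.

(* [abs_cont_on T] is [abs_cont_ab 0 T] by conversion. *)
Definition abs_cont_ab (a b : R) (f : R -> R) : Prop :=
  forall eps, 0 < eps -> exists delta, 0 < delta /\
    forall l, chain a l b -> sum_len l < delta -> sum_var f l < eps.

Lemma abs_cont_on_restrict T f a b :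
  abs_cont_on T f -> 0 <= a -> b <= T -> abs_cont_ab a b f.
Proof.
  intros H Ha Hb eps He. destruct (H eps He) as [d [Hd Hl]].
  exists d; split; auto. intros l Hc Hs. apply Hl; auto. eapply chain_widen; eauto.
Qed.

Lemma lipschitz_abs_cont_ab a b M f : 0 <= M -> lipschitz_on a b M f -> abs_cont_ab a b f.
Proof.
  intros HM Hf eps He. exists (eps / (M + 1)). split.
  - apply Rdiv_lt_0_compat; lra.
  - intros l Hc Hs.
    pose proof (sum_var_le_lipschitz f M a b l a b Hf Hc ltac:(lra) ltac:(lra)).
    pose proof (sum_len_ge_0 _ _ _ Hc).
    assert ((M + 1) * sum_len l < (M + 1) * (eps / (M + 1))) by (apply Rmult_lt_compat_l; lra).
    replace ((M + 1) * (eps / (M + 1))) with eps in H1 by (field; lra). nra.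
Qed.

Lemma abs_cont_ab_affine a b f m k :
  abs_cont_ab a b f -> abs_cont_ab a b (fun s => m * f s + k * s).
Proof.
  intros Hf eps He.
  set (C := 2 * (Rabs m + Rabs k + 1)).
  assert (HC : 0 < C) by (unfold C; pose proof (Rabs_pos m); pose proof (Rabs_pos k); lra).
  destruct (Hf (eps / C) ltac:(apply Rdiv_lt_0_compat; lra)) as [d [Hd Hl]].
  exists (Rmin d (eps / C)). split; [apply Rmin_pos; auto; apply Rdiv_lt_0_compat; lra|].
  intros l Hc Hs. pose proof (Rmin_l d (eps / C)). pose proof (Rmin_r d (eps / C)).
  pose proof (sum_var_affine_le f m k l a b Hc).
  specialize (Hl l Hc ltac:(lra)). pose proof (sum_len_ge_0 _ _ _ Hc).
  pose proof (Rabs_pos m). pose proof (Rabs_pos k).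
  assert (Rabs m * sum_var f l <= Rabs m * (eps / C)) by (apply Rmult_le_compat_l; lra).
  assert (Rabs k * sum_len l <= Rabs k * (eps / C)) by (apply Rmult_le_compat_l; lra).
  assert (0 < eps / C) by (apply Rdiv_lt_0_compat; lra).
  assert ((Rabs m + Rabs k + 1) * (eps / C) = eps / 2) by (unfold C; field; lra).
  lra.
Qed.

Lemma finite_cover (E : list R) eps : 0 < eps ->
  exists r, 0 < r /\ exists a b : nat -> R,
    (forall n, a n <= b n) /\
    (forall e t, In e E -> Rabs (t - e) < r -> exists n, a n < t < b n) /\
    (forall n, sum_f_R0 (fun k => b k - a k) n <= eps).
Proof.
  intros He. set (m := length E). set (r := eps / (2 * (INR m + 1))).
  assert (Hm := pos_INR m).
  assert (Hr : 0 < r) by (unfold r; apply Rdiv_lt_0_compat; lra).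
  exists r; split; auto.
  exists (fun k => if Nat.ltb k m then nth k E 0 - r else 0).
  exists (fun k => if Nat.ltb k m then nth k E 0 + r else 0).
  split; [|split].
  - intros n. destruct (Nat.ltb n m); lra.
  - intros e t Hin Ht. destruct (In_nth E e 0 Hin) as [n [Hn <-]].
    exists n. replace (Nat.ltb n m) with true by (symmetry; apply Nat.ltb_lt; auto).
    apply Rabs_def2 in Ht. lra.
  - assert (Hsum : forall n, sum_f_R0 (fun k => (if Nat.ltb k m then nth k E 0 + r else 0)
                     - (if Nat.ltb k m then nth k E 0 - r else 0)) n = 2 * r * INR (min (S n) m)).
    { induction n as [|n IH]; simpl sum_f_R0.
      - destruct (Nat.ltb 0 m) eqn:Hb; [apply Nat.ltb_lt in Hb|apply Nat.ltb_ge in Hb].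
        + rewrite Nat.min_l by lia. simpl INR. lra.
        + replace (min 1 m) with 0%nat by lia. simpl INR. lra.
      - rewrite IH. destruct (Nat.ltb (S n) m) eqn:Hb; [apply Nat.ltb_lt in Hb|apply Nat.ltb_ge in Hb].
        + rewrite !Nat.min_l by lia. rewrite (S_INR (S n)). lra.
        + rewrite !Nat.min_r by lia. lra. }
    intros n. rewrite Hsum.
    assert (INR (min (S n) m) <= INR m) by (apply le_INR; lia).
    assert (2 * r * (INR m + 1) = eps) by (unfold r; field; lra).
    nra.
Qed.

Lemma null_set_list (E : list R) : null_set (fun t => In t E).
Proof.
  intros eps He. destruct (finite_cover E eps He) as [r [Hr [a [b [H1 [H2 H3]]]]]].
  exists a, b. split; auto. split.
  - intros t Ht. apply (H2 t t Ht). rewrite Rminus_diag, Rabs_R0. auto.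
  - intros n. specialize (H3 n). lra.
Qed.

Definition interleave (f g : nat -> R) (n : nat) : R :=
  if Nat.even n then f (Nat.div2 n) else g (Nat.div2 n).

Lemma sum_interleave f g m :
  sum_f_R0 (interleave f g) (S (2 * m)) = sum_f_R0 f m + sum_f_R0 g m.
Proof.
  induction m as [|m IH]; [unfold interleave; simpl; lra|].
  replace (S (2 * S m)) with (S (S (S (2 * m)))) by lia.
  rewrite (tech5 _ (S (S (2 * m)))), (tech5 _ (S (2 * m))), (tech5 f m), (tech5 g m), IH.
  unfold interleave.
  replace (S (S (2 * m))) with (2 * S m)%nat by lia.
  rewrite Nat.even_succ, Nat.odd_mul, Nat.even_mul, Nat.div2_double, Nat.div2_succ_double.
  simpl. lra.
Qed.

Lemma sum_f_R0_le_shift f n k : (forall i, 0 <= f i) -> sum_f_R0 f n <= sum_f_R0 f (n + k).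
Proof.
  intros Hf. induction k as [|k IH]; [rewrite Nat.add_0_r; lra|].
  replace (n + S k)%nat with (S (n + k)) by lia. rewrite tech5. specialize (Hf (S (n + k))). lra.
Qed.

Lemma null_set_union N1 N2 : null_set N1 -> null_set N2 -> null_set (fun t => N1 t \/ N2 t).
Proof.
  intros H1 H2 eps He.
  destruct (H1 (eps / 2) ltac:(lra)) as [a1 [b1 [Ha1 [Hc1 Hs1]]]].
  destruct (H2 (eps / 2) ltac:(lra)) as [a2 [b2 [Ha2 [Hc2 Hs2]]]].
  exists (interleave a1 a2), (interleave b1 b2). split; [|split].
  - intros n. unfold interleave. destruct (Nat.even n); auto.
  - intros t [Ht|Ht].
    + destruct (Hc1 t Ht) as [n Hn]. exists (2 * n)%nat. unfold interleave.
      rewrite Nat.even_mul, Nat.div2_double. auto.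
    + destruct (Hc2 t Ht) as [n Hn]. exists (S (2 * n)). unfold interleave.
      rewrite Nat.even_succ, Nat.odd_mul, Nat.div2_succ_double. auto.
  - intros n.
    assert (Hlen : forall i, 0 <= interleave b1 b2 i - interleave a1 a2 i).
    { intros i. unfold interleave. destruct (Nat.even i);
      [specialize (Ha1 (Nat.div2 i))|specialize (Ha2 (Nat.div2 i))]; lra. }
    eapply Rle_trans; [apply (sum_f_R0_le_shift _ n (S n) Hlen)|].
    replace (n + S n)%nat with (S (2 * n)) by lia.
    rewrite (sum_eq _ (interleave (fun k => b1 k - a1 k) (fun k => b2 k - a2 k)))
      by (intros i _; unfold interleave; destruct (Nat.even i); auto).
    rewrite sum_interleave. specialize (Hs1 n). specialize (Hs2 n). lra.
Qed.

Lemma ae_on_and T (P Q : R -> Prop) : ae_on T P -> ae_on T Q -> ae_on T (fun t => P t /\ Q t).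
Proof.
  intros [N1 [Hn1 H1]] [N2 [Hn2 H2]]. exists (fun t => N1 t \/ N2 t). split.
  - apply null_set_union; auto.
  - intros t Ht Hn. split; [apply H1|apply H2]; auto.
Qed.

(* Away from the finitely many points of [E], [S] is locally constant, so it differs from an open
   set only inside arbitrarily small neighbourhoods of those points. *)
Lemma lebesgue_measurable_locally_constant (S : R -> Prop) (E : list R) :
  (forall t, ~ In t E -> exists rho, 0 < rho /\ forall s, Rabs (s - t) < rho -> (S s <-> S t)) ->
  lebesgue_measurable S.
Proof.
  intros HS eps He.
  destruct (finite_cover E eps He) as [r [Hr [a [b [H1 [H2 H3]]]]]].
  exists (fun t => (exists e, In e E /\ Rabs (t - e) < r) \/ (S t /\ ~ In t E)).
  split; [|split].
  - intros t [[e [Hin Ht]]|[Ht Hn]].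
    + exists (r - Rabs (t - e)). split; [lra|]. intros s Hs. left. exists e. split; auto.
      pose proof (Rabs_triang (s - t) (t - e)). replace (s - t + (t - e)) with (s - e) in H by ring.
      lra.
    + destruct (HS t Hn) as [rho [Hrho Hc]]. exists rho. split; auto. intros s Hs.
      destruct (classic (In s E)) as [Hi|Hi].
      * left. exists s. split; auto. rewrite Rminus_diag, Rabs_R0. auto.
      * right. split; auto. apply (Hc s Hs). auto.
  - intros t Ht. destruct (classic (In t E)) as [Hi|Hi].
    + left. exists t. split; auto. rewrite Rminus_diag, Rabs_R0. auto.
    + right; auto.
  - intros eps' He'. exists a, b. split; auto. split.
    + intros t [[[e [Hin Ht]]|[Ht _]] Hn]; [|contradiction]. apply (H2 e t Hin Ht).
    + intros n. specialize (H3 n). lra.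
Qed.

Lemma measurable_on_locally_constant T (u : R -> R) (E : list R) :
  (forall t, ~ In t E -> exists rho, 0 < rho /\ forall s, Rabs (s - t) < rho -> u s = u t) ->
  measurable_on T u.
Proof.
  intros Hu alpha. apply (lebesgue_measurable_locally_constant _ (0 :: T :: E)).
  intros t Ht. simpl in Ht.
  destruct (Hu t ltac:(tauto)) as [rho [Hrho Hc]].
  exists (Rmin rho (Rmin (Rabs t) (Rabs (t - T)))). split.
  - apply Rmin_pos; auto. apply Rmin_pos; apply Rabs_pos_lt; intro; apply Ht; lra.
  - intros s Hs. pose proof (Rmin_l rho (Rmin (Rabs t) (Rabs (t - T)))).
    pose proof (Rmin_r rho (Rmin (Rabs t) (Rabs (t - T)))).
    pose proof (Rmin_l (Rabs t) (Rabs (t - T))). pose proof (Rmin_r (Rabs t) (Rabs (t - T))).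
    rewrite (Hc s) by lra. apply Rabs_def2 in Hs. revert H H0 H1 H2 Hs.
    unfold Rabs; repeat destruct Rcase_abs; intros; split; intros [[? ?] ?]; repeat split; lra.
Qed.

Lemma derivable_pt_lim_quadratic c d e z :
  derivable_pt_lim (fun s => c * s * s + d * s + e) z (2 * c * z + d).
Proof.
  intros eps He.
  assert (Hp : 0 < eps / (Rabs c + 1)) by (apply Rdiv_lt_0_compat; [|pose proof (Rabs_pos c)]; lra).
  exists (mkposreal _ Hp). intros h Hh Hlt. simpl in Hlt.
  replace ((c * (z + h) * (z + h) + d * (z + h) + e - (c * z * z + d * z + e)) / h - (2 * c * z + d))
    with (c * h) by (field; auto).
  rewrite Rabs_mult. pose proof (Rabs_pos c). pose proof (Rabs_pos h).
  apply Rle_lt_trans with ((Rabs c + 1) * Rabs h); [nra|].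
  replace eps with ((Rabs c + 1) * (eps / (Rabs c + 1))) by (field; lra).
  apply Rmult_lt_compat_l; lra.
Qed.

Lemma derivable_pt_lim_near f g t l l' rho : 0 < rho ->
  (forall s, Rabs (s - t) < rho -> g s = f s) -> derivable_pt_lim f t l -> l = l' ->
  derivable_pt_lim g t l'.
Proof.
  intros Hr Hg Hf <-. apply (derivable_pt_lim_locally_ext f g t (t - rho) (t + rho)); [lra| |auto].
  intros z Hz. symmetry. apply Hg. apply Rabs_def1; lra.
Qed.

Lemma derivable_pt_lim_scal_plus f t l a b : derivable_pt_lim f t l ->
  derivable_pt_lim (fun s => a * f s + b) t (a * l).
Proof.
  intros H. rewrite <- (Rplus_0_r (a * l)).
  exact (derivable_pt_lim_plus (mult_real_fct a f) (fct_cte b) t _ _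
           (derivable_pt_lim_scal f a t l H) (derivable_pt_lim_const b t)).
Qed.

Lemma derivable_pt_lim_approx f t l eps : derivable_pt_lim f t l -> 0 < eps ->
  exists rho, 0 < rho /\ forall s, Rabs (s - t) < rho ->
    Rabs (f s - f t - l * (s - t)) <= eps * Rabs (s - t).
Proof.
  intros Hd He. destruct (Hd eps He) as [[d Hdp] Hd']. exists d. split; auto.
  intros s Hs. destruct (Req_dec s t) as [->|E].
  - rewrite !Rminus_diag, Rmult_0_r, Rminus_0_r, Rabs_R0. lra.
  - specialize (Hd' (s - t) ltac:(lra) Hs). simpl in Hd'.
    replace (t + (s - t)) with s in Hd' by ring.
    replace (f s - f t - l * (s - t)) with (((f s - f t) / (s - t) - l) * (s - t)) by (field; lra).
    rewrite Rabs_mult. apply Rmult_le_compat_r; [apply Rabs_pos|lra].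
Qed.

(** * A comparison principle for absolutely continuous functions *)

Fixpoint tiles (Q : R -> R -> Prop) (lo : R) (l : list (R * R)) (hi : R) : Prop :=
  match l with
  | nil => lo = hi
  | (u, v) :: r => u = lo /\ u <= v /\ Q u v /\ tiles Q v r hi
  end.

Lemma tiles_snoc Q l lo mid hi :
  tiles Q lo l mid -> mid <= hi -> Q mid hi -> tiles Q lo (l ++ (mid, hi) :: nil) hi.
Proof.
  revert lo; induction l as [|[u v] r IH]; simpl; intros lo H1 H2 H3.
  - subst. auto.
  - destruct H1 as [? [? [? ?]]]. repeat split; auto.
Qed.

(* Cousin's lemma: a gauge on [a,b] admits a fine tiling; the supremum of the tileable initial
   segments is itself tileable and cannot be smaller than [b]. *)
Lemma cousin (Q : R -> R -> Prop) a b : a <= b ->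
  (forall t, a <= t <= b -> exists rho, 0 < rho /\
     forall u v, a <= u -> u <= t -> t <= v -> v <= b -> v - u < rho -> Q u v) ->
  exists l, tiles Q a l b.
Proof.
  intros Hab Hg.
  set (E := fun s => a <= s <= b /\ exists l, tiles Q a l s).
  assert (Ea : E a) by (split; [lra|exists nil; simpl; auto]).
  assert (HB : bound E) by (exists b; intros s [Hs _]; lra).
  destruct (completeness E HB (ex_intro _ a Ea)) as [m [Hub Hlub]].
  assert (Ham : a <= m) by (apply Hub; auto).
  assert (Hmb : m <= b) by (apply Hlub; intros s [Hs _]; lra).
  destruct (Hg m ltac:(lra)) as [rho [Hrho HQ]].
  assert (Hex : exists s, E s /\ m - rho < s).
  { apply NNPP. intro Hn. assert (m <= m - rho); [|lra]. apply Hlub. intros s Hs.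
    apply Rnot_lt_le. intro. apply Hn. exists s. auto. }
  destruct Hex as [s [[Hs [l Hl]] Hs2]].
  assert (Hsm : s <= m) by (apply Hub; split; eauto).
  assert (Em : exists l, tiles Q a l m).
  { exists (l ++ (s, m) :: nil). apply tiles_snoc; auto. apply HQ; lra. }
  destruct (Req_dec m b) as [<-|Hne]; [exact Em|exfalso].
  set (m' := Rmin b (m + rho / 2)).
  assert (m < m') by (unfold m'; apply Rmin_glb_lt; lra).
  assert (m' <= b) by apply Rmin_l. assert (m' <= m + rho / 2) by apply Rmin_r.
  assert (E m').
  { destruct Em as [l' Hl']. split; [lra|]. exists (l' ++ (m, m') :: nil).
    apply tiles_snoc; auto; try lra. apply HQ; lra. }
  assert (m' <= m) by (apply Hub; auto). lra.
Qed.

Definition inside (uv W : R * R) : Prop := fst W <= fst uv /\ snd uv <= snd W.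

Lemma sum_len_inside W l lo hi : chain lo l hi -> Forall (fun uv => inside uv W) l ->
  fst W <= snd W -> sum_len l <= snd W - fst W.
Proof.
  destruct W as [al be]. simpl. intros Hc Hf Hle.
  assert (forall l lo hi, chain lo l hi -> Forall (fun uv => inside uv (al, be)) l ->
            sum_len l + Rmax al lo <= Rmax be lo).
  { induction l0 as [|[u v] r IH]; simpl; intros lo0 hi0 H1 H2.
    - unfold Rmax; repeat destruct Rle_dec; lra.
    - destruct H1 as [? [? ?]]. inversion H2; subst. unfold inside in H5; simpl in H5.
      specialize (IH v hi0 H1 H6). revert IH. unfold Rmax; repeat destruct Rle_dec; intros; lra. }
  specialize (H l lo hi Hc Hf). revert H. unfold Rmax; repeat destruct Rle_dec; intros; lra.
Qed.

Lemma chain_partition (P : R * R -> Prop) l lo hi : chain lo l hi ->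
  exists l1 l2, chain lo l1 hi /\ chain lo l2 hi /\ sum_len l = sum_len l1 + sum_len l2 /\
    Forall P l1 /\ Forall (fun uv => ~ P uv) l2 /\ incl (l1 ++ l2) l.
Proof.
  revert lo; induction l as [|[u v] r IH]; simpl; intros lo Hc.
  - exists nil, nil. simpl. repeat split; auto; try lra; try constructor; intros uv [].
  - destruct Hc as [H1 [H2 H3]]. destruct (IH v H3) as [l1 [l2 [C1 [C2 [S [F1 [F2 Hin]]]]]]].
    destruct (classic (P (u, v))) as [Hp|Hp].
    + exists ((u, v) :: l1), l2. simpl. repeat split; try lra; auto.
      * eapply chain_widen; eauto; lra.
      * intros uv [E|E]; [left; auto|right; apply Hin; auto].
    + exists l1, ((u, v) :: l2). simpl. repeat split; try lra; auto.
      * eapply chain_widen; eauto; lra.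
      * intros uv Huv. apply in_app_or in Huv as [E|[E|E]]; [| left; auto |];
          right; apply Hin, in_or_app; tauto.
Qed.

Lemma sum_len_le_cover Ws l lo hi : chain lo l hi ->
  Forall (fun uv => exists W, In W Ws /\ inside uv W) l ->
  Forall (fun W => fst W <= snd W) Ws -> sum_len l <= sum_len Ws.
Proof.
  revert l lo hi; induction Ws as [|W Ws IH]; intros l lo hi Hc Hf HW.
  - destruct l as [|uv l']; simpl; [lra|]. inversion Hf; subst. destruct H1 as [W [[] _]].
  - inversion HW; subst.
    destruct (chain_partition (fun uv => inside uv W) l lo hi Hc)
      as [l1 [l2 [C1 [C2 [-> [F1 [F2 Hin]]]]]]].
    simpl. assert (sum_len l1 <= snd W - fst W) by (eapply sum_len_inside; eauto).
    assert (sum_len l2 <= sum_len Ws); [|lra].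
    apply (IH l2 lo hi C2); auto. rewrite Forall_forall in *. intros uv Huv.
    destruct (Hf uv (Hin uv (in_or_app _ _ _ (or_intror Huv)))) as [W' [[<-|E] Hi]].
    + exfalso. apply (F2 uv Huv Hi).
    + exists W'; auto.
Qed.

Fixpoint windows (al be : nat -> R) (K : nat) : list (R * R) :=
  match K with
  | O => (al O, be O) :: nil
  | S k => (al (S k), be (S k)) :: windows al be k
  end.

Lemma sum_len_le_countable_cover (al be : nat -> R) l lo hi : chain lo l hi ->
  (forall n, al n <= be n) -> Forall (fun uv => exists n, inside uv (al n, be n)) l ->
  exists K, sum_len l <= sum_f_R0 (fun k => be k - al k) K.
Proof.
  intros Hc Hab Hf.
  assert (HK : exists K, Forall (fun uv => exists n, (n <= K)%nat /\ inside uv (al n, be n)) l).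
  { clear Hc. induction Hf as [|uv l [n Hn] _ [K HK]]; [exists O; constructor|].
    exists (Nat.max K n). constructor; [exists n; split; [lia|auto]|].
    eapply Forall_impl; [|exact HK]. intros w [m [Hm A]]. exists m. split; [lia|auto]. }
  destruct HK as [K HK]. exists K.
  assert (Hlen : forall K, sum_len (windows al be K) = sum_f_R0 (fun k => be k - al k) K).
  { induction K0; simpl; [ring|]. rewrite <- IHK0. simpl. ring. }
  assert (Hin : forall K n, (n <= K)%nat -> In (al n, be n) (windows al be K)).
  { induction K0; intros n Hn; simpl.
    - left. replace n with O by lia. auto.
    - destruct (Nat.eq_dec n (S K0)) as [->|]; [left; auto|right; apply IHK0; lia]. }
  rewrite <- Hlen. apply (sum_len_le_cover _ l lo hi Hc).
  - eapply Forall_impl; [|exact HK]. intros uv [n [Hn A]]. exists (al n, be n); auto.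
  - clear - Hab. induction K; simpl; constructor; simpl; auto.
Qed.

Lemma tiles_increment_le (h g : R -> R) k M (B : R -> R -> Prop) lo l hi : 0 <= k ->
  tiles (fun u v => h v - h u <= k * (v - u) \/
                    (B u v /\ h v - h u <= Rabs (g v - g u) + M * (v - u))) lo l hi ->
  exists lb, chain lo lb hi /\ Forall (fun uv => B (fst uv) (snd uv)) lb /\
    h hi - h lo <= k * (hi - lo) + sum_var g lb + M * sum_len lb.
Proof.
  intros Hk. revert lo; induction l as [|[u v] r IH]; simpl; intros lo Ht.
  - subst. exists nil. simpl. split; [lra|split; [constructor|lra]].
  - destruct Ht as [<- [Huv [HQ Hr]]]. destruct (IH v Hr) as [lb [Hc [Hf Hs]]].
    destruct HQ as [Hg|[Hb Hi]].
    + exists lb. split; [eapply chain_widen; eauto; lra|split; [auto|lra]].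
    + exists ((u, v) :: lb). simpl. split; [repeat split; auto; lra|split; [constructor; auto|]].
      assert (0 <= k * (v - u)) by (apply Rmult_le_pos; lra). lra.
Qed.

Lemma straddle_increment_le g G t d e eps :
  derivable_pt_lim g t d -> derivable_pt_lim G t e -> d <= e -> 0 < eps ->
  exists rho, 0 < rho /\ forall u v, u <= t <= v -> v - u < rho ->
    (g v - G v) - (g u - G u) <= 2 * eps * (v - u).
Proof.
  intros Hg HG Hde He.
  destruct (derivable_pt_lim_approx g t d eps Hg He) as [r1 [Hr1 H1]].
  destruct (derivable_pt_lim_approx G t e eps HG He) as [r2 [Hr2 H2]].
  exists (Rmin r1 r2). split; [apply Rmin_pos; auto|].
  intros u v [Hut Htv] Huv. pose proof (Rmin_l r1 r2). pose proof (Rmin_r r1 r2).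
  assert (Ev : Rabs (v - t) = v - t) by (apply Rabs_right; lra).
  assert (Eu : Rabs (u - t) = t - u) by (rewrite Rabs_left1; lra).
  pose proof (H1 v ltac:(lra)) as A1. pose proof (H2 v ltac:(lra)) as A2.
  pose proof (H1 u ltac:(lra)) as A3. pose proof (H2 u ltac:(lra)) as A4.
  rewrite Ev in A1, A2. rewrite Eu in A3, A4.
  apply Rabs_le_bounds in A1, A2, A3, A4. nra.
Qed.

Lemma increment_le_eps a b g G M N eps :
  a <= b -> abs_cont_ab a b g -> 0 <= M -> lipschitz_on a b M G -> null_set N -> 0 < eps ->
  (forall t, a <= t <= b -> ~ N t ->
     exists d e, derivable_pt_lim g t d /\ derivable_pt_lim G t e /\ d <= e) ->
  (g b - G b) - (g a - G a) <= eps * (2 * (b - a) + 1 + M).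
Proof.
  intros Hab Hg HM HG HN He Hd.
  set (h := fun t => g t - G t).
  destruct (Hg eps He) as [delta [Hdel Hvar]].
  set (eta := Rmin eps delta / 2).
  assert (Heta : 0 < eta) by (unfold eta; apply Rdiv_lt_0_compat; [apply Rmin_pos|]; lra).
  assert (Heta1 : eta <= eps) by (unfold eta; pose proof (Rmin_l eps delta); lra).
  assert (Heta2 : eta < delta) by (unfold eta; pose proof (Rmin_r eps delta); lra).
  destruct (HN eta Heta) as [al [be [Hale [Hcov Hsum]]]].
  set (B := fun u v => exists n, inside (u, v) (al n, be n)).
  assert (Hbad : forall u v, a <= u -> u <= v -> v <= b ->
                   h v - h u <= Rabs (g v - g u) + M * (v - u)).
  { intros u v Hu Huv Hv. pose proof (HG v u ltac:(lra) ltac:(lra)).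
    rewrite (Rabs_right (v - u)) in H by lra. apply Rabs_le_bounds in H.
    pose proof (Rle_abs (g v - g u)). unfold h. lra. }
  destruct (cousin (fun u v => h v - h u <= 2 * eps * (v - u) \/
                      (B u v /\ h v - h u <= Rabs (g v - g u) + M * (v - u))) a b Hab)
    as [l Hl].
  { intros t Ht. destruct (classic (N t)) as [HNt|HNt].
    - destruct (Hcov t HNt) as [n Hn]. exists (Rmin (t - al n) (be n - t)).
      split; [apply Rmin_pos; lra|].
      intros u v Hu Hut Htv Hv Huv. right.
      pose proof (Rmin_l (t - al n) (be n - t)). pose proof (Rmin_r (t - al n) (be n - t)).
      split; [exists n; unfold inside; simpl; lra|apply Hbad; lra].
    - destruct (Hd t Ht HNt) as [d [e [H1 [H2 H3]]]].
      destruct (straddle_increment_le g G t d e eps H1 H2 H3 He) as [rho [Hrho Hs]].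
      exists rho. split; auto. intros u v _ Hut Htv _ Huv. left. apply Hs; lra. }
  destruct (tiles_increment_le h g (2 * eps) M B a l b ltac:(lra) Hl) as [lb [Hc [Hf Hs]]].
  destruct (sum_len_le_countable_cover al be lb a b Hc Hale Hf) as [K HK].
  specialize (Hsum K).
  assert (sum_var g lb < eps) by (apply Hvar; auto; lra).
  assert (M * sum_len lb <= M * eps) by (apply Rmult_le_compat_l; lra).
  unfold h in Hs. lra.
Qed.

Lemma increment_le_of_derive_le a b g G M N :
  a <= b -> abs_cont_ab a b g -> 0 <= M -> lipschitz_on a b M G -> null_set N ->
  (forall t, a < t < b -> ~ N t ->
     exists d e, derivable_pt_lim g t d /\ derivable_pt_lim G t e /\ d <= e) ->
  g b - g a <= G b - G a.
Proof.
  intros Hab Hg HM HG HN Hd.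
  set (C := 2 * (b - a) + 1 + M).
  assert (HC : 0 < C) by (unfold C; lra).
  apply Rle_plus_epsilon. intros eps He.
  assert (Heps : 0 < eps / C) by (apply Rdiv_lt_0_compat; lra).
  pose proof (increment_le_eps a b g G M (fun t => N t \/ In t (a :: b :: nil)) (eps / C)
                Hab Hg HM HG (null_set_union _ _ HN (null_set_list _)) Heps) as Hinc.
  assert (eps / C * C = eps) by (field; lra).
  enough ((g b - G b) - (g a - G a) <= eps / C * C) by lra.
  apply Hinc. intros t Ht Hn. apply Hd; [|tauto].
  split; apply Rnot_le_lt; intro; apply Hn; right; simpl; lra.
Qed.

Lemma Rabs_increment_le_of_derive_le a b g G M N :
  a <= b -> abs_cont_ab a b g -> 0 <= M -> lipschitz_on a b M G -> null_set N ->
  (forall t, a < t < b -> ~ N t ->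
     exists d e, derivable_pt_lim g t d /\ derivable_pt_lim G t e /\ Rabs d <= e) ->
  Rabs (g b - g a) <= G b - G a.
Proof.
  intros Hab Hg HM HG HN Hd. apply Rabs_le.
  assert (g b - g a <= G b - G a).
  { apply (increment_le_of_derive_le a b g G M N); auto.
    intros t Ht Hn. destruct (Hd t Ht Hn) as [d [e [H1 [H2 H3]]]].
    exists d, e. pose proof (Rle_abs d). repeat split; auto; lra. }
  assert ((-1 * g b + 0 * b) - (-1 * g a + 0 * a) <= G b - G a).
  { apply (increment_le_of_derive_le a b (fun s => -1 * g s + 0 * s) G M N); auto.
    - apply abs_cont_ab_affine; auto.
    - intros t Ht Hn. destruct (Hd t Ht Hn) as [d [e [H1 [H2 H3]]]].
      exists (-1 * d), e. repeat split; auto.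
      + apply (derivable_pt_lim_near (fun s => -1 * g s + 0) _ _ (-1 * d) _ 1); auto; [lra| |].
        * intros; ring.
        * apply derivable_pt_lim_scal_plus; auto.
      + pose proof (Rle_abs (- d)) as Hnd. rewrite Rabs_Ropp in Hnd. lra. }
  lra.
Qed.

Definition continuous_on (T : R) (f : R -> R) : Prop :=
  forall t, 0 <= t <= T -> forall eps, 0 < eps -> exists delta, 0 < delta /\
    forall s, 0 <= s <= T -> Rabs (s - t) < delta -> Rabs (f s - f t) < eps.

Lemma abs_cont_continuous_on T f : abs_cont_on T f -> continuous_on T f.
Proof.
  intros H t Ht eps He. destruct (H eps He) as [d [Hd Hl]]. exists d. split; auto.
  intros s Hs Hst. destruct (Rle_dec s t).
  - assert (Hc : chain 0 ((s, t) :: nil) T) by (simpl; lra).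
    rewrite Rabs_left1 in Hst by lra.
    assert (sum_var f ((s, t) :: nil) < eps) by (apply Hl; auto; simpl; lra).
    simpl in H0. rewrite Rabs_minus_sym. lra.
  - assert (Hc : chain 0 ((t, s) :: nil) T) by (simpl; lra).
    rewrite Rabs_right in Hst by lra.
    assert (sum_var f ((t, s) :: nil) < eps) by (apply Hl; auto; simpl; lra).
    simpl in H0. lra.
Qed.

Lemma continuous_on_continuity_pt T f t : continuous_on T f -> 0 < t < T -> continuity_pt f t.
Proof.
  intros Hf Ht eps He. destruct (Hf t ltac:(lra) eps He) as [d [Hd Hs]].
  exists (Rmin d (Rmin t (T - t))). split.
  - apply Rmin_pos; auto. apply Rmin_pos; lra.
  - intros s [_ Hst]. simpl in *. unfold R_dist in *.
    pose proof (Rmin_l d (Rmin t (T - t))). pose proof (Rmin_r d (Rmin t (T - t))).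
    pose proof (Rmin_l t (T - t)). pose proof (Rmin_r t (T - t)).
    apply Rabs_def2 in Hst as Hst'. apply Hs; lra.
Qed.

Lemma continuous_on_sign_const T f a b : continuous_on T f -> 0 <= a -> b <= T ->
  (forall t, a < t < b -> f t <> 0) -> forall s t, a < s < b -> a < t < b -> 0 < f s * f t.
Proof.
  intros Hf Ha Hb Hnz.
  assert (Hc : forall z, a < z < b -> continuity_pt f z)
    by (intros z Hz; apply (continuous_on_continuity_pt T); auto; lra).
  assert (Key : forall s t, a < s < b -> a < t < b -> s < t -> 0 < f s * f t).
  { intros s t Hs Ht Hst. apply Rnot_le_lt. intro Hle.
    pose proof (Hnz s Hs). pose proof (Hnz t Ht).
    destruct (Rlt_dec (f s) 0) as [Hneg|Hpos].
    - destruct (Ranalysis5.IVT_interv f s t) as [z [Hz Hfz]]; auto.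
      + intros z Hz. apply Hc. lra.
      + destruct (Rtotal_order (f t) 0) as [?|[?|?]]; nra.
      + apply (Hnz z); auto; lra.
    - destruct (Ranalysis5.IVT_interv (opp_fct f) s t) as [z [Hz Hfz]]; auto;
        unfold opp_fct in *.
      + intros z Hz. apply continuity_pt_opp, Hc. lra.
      + lra.
      + destruct (Rtotal_order (f t) 0) as [?|[?|?]]; nra.
      + apply (Hnz z); [lra|lra]. }
  intros s t Hs Ht. destruct (Rtotal_order s t) as [H|[<-|H]].
  - apply Key; auto.
  - pose proof (Hnz s Hs). destruct (Rtotal_order (f s) 0) as [?|[?|?]]; nra.
  - rewrite Rmult_comm. apply Key; auto.
Qed.

Lemma continuous_on_nonzero_near T f t : continuous_on T f -> 0 <= t <= T -> f t <> 0 ->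
  exists d, 0 < d /\ forall s, 0 <= s <= T -> Rabs (s - t) < d -> f s <> 0.
Proof.
  intros Hf Ht Hnz. destruct (Hf t Ht (Rabs (f t)) (Rabs_pos_lt _ Hnz)) as [d [Hd H]].
  exists d. split; auto. intros s Hs Hst E. specialize (H s Hs Hst). rewrite E in H.
  rewrite Rminus_0_l, Rabs_Ropp in H. lra.
Qed.

Lemma continuous_on_abs_comb T f g k : continuous_on T f -> continuous_on T g ->
  continuous_on T (fun t => Rabs (f t) + k * Rabs (g t)).
Proof.
  intros Hf Hg t Ht eps He.
  set (eps' := eps / (2 * (Rabs k + 1))).
  assert (Hk := Rabs_pos k).
  assert (He' : 0 < eps') by (unfold eps'; apply Rdiv_lt_0_compat; lra).
  destruct (Hf t Ht (eps / 2) ltac:(lra)) as [d1 [Hd1 H1]].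
  destruct (Hg t Ht eps' He') as [d2 [Hd2 H2]].
  exists (Rmin d1 d2). split; [apply Rmin_pos; auto|]. intros s Hs Hst.
  pose proof (Rmin_l d1 d2). pose proof (Rmin_r d1 d2).
  specialize (H1 s Hs ltac:(lra)). specialize (H2 s Hs ltac:(lra)).
  replace (Rabs (f s) + k * Rabs (g s) - (Rabs (f t) + k * Rabs (g t)))
    with ((Rabs (f s) - Rabs (f t)) + k * (Rabs (g s) - Rabs (g t))) by ring.
  eapply Rle_lt_trans; [apply Rabs_triang|]. rewrite Rabs_mult.
  pose proof (Rabs_triang_inv2 (f s) (f t)). pose proof (Rabs_triang_inv2 (g s) (g t)).
  assert (Rabs k * Rabs (Rabs (g s) - Rabs (g t)) <= (Rabs k + 1) * eps').
  { pose proof (Rabs_pos (Rabs (g s) - Rabs (g t))). nra. }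
  assert ((Rabs k + 1) * eps' = eps / 2) by (unfold eps'; field; lra).
  lra.
Qed.

Lemma null_set_no_interval N a b : null_set N -> a < b -> ~ (forall t, a < t < b -> N t).
Proof.
  intros HN Hab HI.
  assert (2 * b - 2 * a <= b - a); [|lra].
  apply (increment_le_of_derive_le a b (fun t => 2 * t) (fun t => t) 1 N); try lra; auto.
  - apply (lipschitz_abs_cont_ab a b 2); [lra|]. intros s t _ _.
    replace (2 * s - 2 * t) with (2 * (s - t)) by ring. rewrite Rabs_mult, Rabs_right; lra.
  - intros s t _ _. lra.
  - intros t Ht Hn. exfalso. auto.
Qed.

Lemma ae_on_continuous_eq T f c : 0 < T -> continuous_on T f -> ae_on T (fun t => f t = c) ->
  forall t, 0 <= t <= T -> f t = c.
Proof.
  intros HT Hf [N [HN HP]] t Ht. apply NNPP. intro Hne.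
  assert (He : 0 < Rabs (f t - c)) by (apply Rabs_pos_lt; lra).
  destruct (Hf t Ht _ He) as [d [Hd Hs]].
  apply (null_set_no_interval N (Rmax 0 (t - d / 2)) (Rmin T (t + d / 2)) HN).
  - unfold Rmax, Rmin. repeat destruct Rle_dec; lra.
  - intros s [Hs1 Hs2]. apply NNPP. intro Hn.
    pose proof (Rmax_l 0 (t - d / 2)). pose proof (Rmin_l T (t + d / 2)).
    pose proof (Rmax_r 0 (t - d / 2)). pose proof (Rmin_r T (t + d / 2)).
    specialize (Hs s ltac:(lra) ltac:(apply Rabs_def1; lra)).
    rewrite (HP s ltac:(lra) Hn), Rabs_minus_sym in Hs. lra.
Qed.

(** * The tent competitor *)

Definition half_signed_sq (z : R) : R := z * Rabs z / 2.

Lemma half_signed_sq_derive z : derivable_pt_lim half_signed_sq z (Rabs z).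
Proof.
  destruct (Rtotal_order z 0) as [Hz|[->|Hz]].
  - eapply (derivable_pt_lim_near (fun s => (-1/2) * s * s + 0 * s + 0) _ _ _ _ (- z));
      [lra| |apply derivable_pt_lim_quadratic|rewrite Rabs_left by lra; field].
    intros s Hs. apply Rabs_def2 in Hs. unfold half_signed_sq. rewrite Rabs_left by lra. field.
  - intros eps He. exists (mkposreal eps He). intros h Hh Hlt. simpl in Hlt.
    unfold half_signed_sq. rewrite Rplus_0_l, Rabs_R0.
    replace ((h * Rabs h / 2 - 0 * 0 / 2) / h - 0) with (Rabs h / 2) by (field; auto).
    pose proof (Rabs_pos h). rewrite Rabs_right; lra.
  - eapply (derivable_pt_lim_near (fun s => (1/2) * s * s + 0 * s + 0) _ _ _ _ z);
      [lra| |apply derivable_pt_lim_quadratic|rewrite Rabs_right by lra; field].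
    intros s Hs. apply Rabs_def2 in Hs. unfold half_signed_sq. rewrite Rabs_right by lra. field.
Qed.

Lemma half_signed_sq_lipschitz u v B : Rabs u <= B -> Rabs v <= B ->
  Rabs (half_signed_sq u - half_signed_sq v) <= B * Rabs (u - v).
Proof.
  intros Hu Hv. unfold half_signed_sq.
  destruct (Rle_dec 0 u); destruct (Rle_dec 0 v);
  [rewrite (Rabs_right u) in * by lra; rewrite (Rabs_right v) in * by lra
  |rewrite (Rabs_right u) in * by lra; rewrite (Rabs_left v) in * by lra
  |rewrite (Rabs_left u) in * by lra; rewrite (Rabs_right v) in * by lra
  |rewrite (Rabs_left u) in * by lra; rewrite (Rabs_left v) in * by lra];
  (destruct (Rle_dec 0 (u - v));
   [rewrite (Rabs_right (u - v)) by lra|rewrite (Rabs_left (u - v)) by lra]);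
  match goal with |- Rabs ?e <= _ => destruct (Rle_dec 0 e);
   [rewrite (Rabs_right e) by lra|rewrite (Rabs_left e) by lra] end; nra.
Qed.

Lemma Rabs_sign sg : sg * sg = 1 -> Rabs sg = 1.
Proof.
  intros H. destruct (Rle_dec 0 sg); [rewrite Rabs_right|rewrite Rabs_left]; nra.
Qed.

(* The competitor: [x] has slope [sg] up to time [tau], where it reaches [P], and slope [- sg]
   afterwards; [y] follows [lam] times the area under [|x|]. *)
Definition tent (sg tau P t : R) : R := P - sg * Rabs (t - tau).

(* [half_signed_sq] is a primitive of [Rabs], so along a leg of slope [sg] the area under [|x|]
   is [sg] times the increment of [half_signed_sq x]. *)
Definition tent_area (sg tau P t : R) : R :=
  if Rle_dec t tau then sg * half_signed_sq (tent sg tau P t)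
  else sg * (2 * half_signed_sq P - half_signed_sq (tent sg tau P t)).

Definition tent_u1 (sg tau t : R) : R := if Rlt_dec t tau then sg else - sg.

Definition tent_u2 (sg tau P lam t : R) : R := if Rle_dec 0 (tent sg tau P t) then lam else - lam.

Section Tent.
Variables (sg tau P : R).
Hypothesis sg_sq : sg * sg = 1.

Lemma tent_lipschitz s t : Rabs (tent sg tau P s - tent sg tau P t) <= Rabs (s - t).
Proof.
  unfold tent. replace (P - sg * Rabs (s - tau) - (P - sg * Rabs (t - tau)))
    with (- sg * (Rabs (s - tau) - Rabs (t - tau))) by ring.
  rewrite Rabs_mult, Rabs_Ropp, Rabs_sign, Rmult_1_l by auto.
  replace (s - t) with ((s - tau) - (t - tau)) by ring. apply Rabs_triang_inv2.
Qed.

Lemma tent_derive t : t <> tau -> derivable_pt_lim (tent sg tau P) t (tent_u1 sg tau t).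
Proof.
  intros Ht. unfold tent_u1. destruct (Rlt_dec t tau).
  - eapply (derivable_pt_lim_near (fun s => 0 * s * s + sg * s + (P - sg * tau)) _ _ _ _ (tau - t));
      [lra| |apply derivable_pt_lim_quadratic|ring].
    intros s Hs. apply Rabs_def2 in Hs. unfold tent. rewrite Rabs_left by lra. ring.
  - eapply (derivable_pt_lim_near (fun s => 0 * s * s + (- sg) * s + (P + sg * tau)) _ _ _ _ (t - tau));
      [lra| |apply derivable_pt_lim_quadratic|ring].
    intros s Hs. apply Rabs_def2 in Hs. unfold tent. rewrite Rabs_right by lra. ring.
Qed.

Lemma tent_area_after t : tau <= t ->
  tent_area sg tau P t = sg * (2 * half_signed_sq P - half_signed_sq (tent sg tau P t)).
Proof.
  intros Ht. unfold tent_area. destruct (Rle_dec t tau); auto.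
  replace t with tau by lra. unfold tent. rewrite Rminus_diag, Rabs_R0, Rmult_0_r, Rminus_0_r.
  ring.
Qed.

Lemma tent_area_derive t : t <> tau ->
  derivable_pt_lim (tent_area sg tau P) t (Rabs (tent sg tau P t)).
Proof.
  intros Ht.
  assert (Hx := tent_derive t Ht).
  assert (Hc := derivable_pt_lim_comp _ _ _ _ _ Hx (half_signed_sq_derive (tent sg tau P t))).
  unfold comp in Hc. unfold tent_u1 in Hx, Hc. destruct (Rlt_dec t tau).
  - eapply (derivable_pt_lim_near (fun s => sg * half_signed_sq (tent sg tau P s) + 0) _ _ _ _ (tau - t));
      [lra| |apply derivable_pt_lim_scal_plus; exact Hc|].
    + intros s Hs. apply Rabs_def2 in Hs. unfold tent_area.
      destruct (Rle_dec s tau); [ring|lra].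
    + replace (sg * (Rabs (tent sg tau P t) * sg)) with ((sg * sg) * Rabs (tent sg tau P t)) by ring.
      rewrite sg_sq. ring.
  - eapply (derivable_pt_lim_near
             (fun s => (- sg) * half_signed_sq (tent sg tau P s) + sg * (2 * half_signed_sq P))
             _ _ _ _ (t - tau));
      [lra| |apply derivable_pt_lim_scal_plus; exact Hc|].
    + intros s Hs. apply Rabs_def2 in Hs. rewrite tent_area_after by lra. ring.
    + replace (- sg * (Rabs (tent sg tau P t) * - sg)) with ((sg * sg) * Rabs (tent sg tau P t))
        by ring.
      rewrite sg_sq. ring.
Qed.

Lemma tent_area_lipschitz a b B : a <= tau <= b ->
  (forall r, a <= r <= b -> Rabs (tent sg tau P r) <= B) ->
  lipschitz_on a b B (tent_area sg tau P).
Proof.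
  intros Htau HB.
  assert (HB0 : 0 <= B) by (specialize (HB tau Htau); pose proof (Rabs_pos (tent sg tau P tau)); lra).
  assert (Hleg : forall s t, a <= s <= b -> a <= t <= b ->
            Rabs (sg * half_signed_sq (tent sg tau P s) - sg * half_signed_sq (tent sg tau P t))
            <= B * Rabs (s - t)).
  { intros s t Hs Ht. rewrite <- Rmult_minus_distr_l, Rabs_mult, Rabs_sign, Rmult_1_l by auto.
    eapply Rle_trans; [apply half_signed_sq_lipschitz; apply HB; auto|].
    apply Rmult_le_compat_l; auto. apply tent_lipschitz. }
  assert (Hside : forall s t, a <= s <= b -> a <= t <= b ->
            (s <= tau /\ t <= tau) \/ (tau <= s /\ tau <= t) ->
            Rabs (tent_area sg tau P s - tent_area sg tau P t) <= B * Rabs (s - t)).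
  { intros s t Hs Ht [[Hs' Ht']|[Hs' Ht']].
    - unfold tent_area. destruct (Rle_dec s tau); [|lra]. destruct (Rle_dec t tau); [auto|lra].
    - rewrite !tent_area_after by lra.
      replace (sg * (2 * half_signed_sq P - half_signed_sq (tent sg tau P s)) -
               sg * (2 * half_signed_sq P - half_signed_sq (tent sg tau P t)))
        with (- (sg * half_signed_sq (tent sg tau P s) - sg * half_signed_sq (tent sg tau P t)))
        by ring.
      rewrite Rabs_Ropp. auto. }
  intros s t Hs Ht.
  destruct (Rle_dec s tau); destruct (Rle_dec t tau); try (apply Hside; auto; lra);
    pose proof (Hside s tau Hs Htau ltac:(lra)) as H1;
    pose proof (Hside tau t Htau Ht ltac:(lra)) as H2;
    pose proof (Rabs_triang (tent_area sg tau P s - tent_area sg tau P tau)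
                            (tent_area sg tau P tau - tent_area sg tau P t)) as H3;
    replace (tent_area sg tau P s - tent_area sg tau P tau +
             (tent_area sg tau P tau - tent_area sg tau P t))
      with (tent_area sg tau P s - tent_area sg tau P t) in H3 by ring.
  - rewrite (Rabs_left1 (s - tau)), (Rabs_left1 (tau - t)) in * by lra.
    rewrite (Rabs_left1 (s - t)) by lra. nra.
  - rewrite (Rabs_right (s - tau)), (Rabs_right (tau - t)) in * by lra.
    rewrite (Rabs_right (s - t)) by lra. nra.
Qed.

Lemma tent_u1_measurable T' : measurable_on T' (tent_u1 sg tau).
Proof.
  apply (measurable_on_locally_constant T' _ (tau :: nil)). intros t Ht.
  assert (t <> tau) by (intro; apply Ht; left; auto).
  exists (Rabs (t - tau)). split; [apply Rabs_pos_lt; lra|]. intros s Hs.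
  apply Rabs_def2 in Hs. unfold tent_u1. revert Hs.
  destruct (Rlt_dec s tau); destruct (Rlt_dec t tau); auto;
    unfold Rabs; destruct Rcase_abs; intros; lra.
Qed.

Lemma tent_u2_measurable T' lam : measurable_on T' (tent_u2 sg tau P lam).
Proof.
  apply (measurable_on_locally_constant T' _ ((tau - sg * P) :: (tau + sg * P) :: nil)).
  intros t Ht.
  assert (Hnz : tent sg tau P t <> 0).
  { intro E. apply Ht. unfold tent in E.
    assert (sg * P = Rabs (t - tau)) by
      (replace (sg * P) with (sg * (P - sg * Rabs (t - tau)) + (sg * sg) * Rabs (t - tau))
         by ring; rewrite E, sg_sq; ring).
    revert H. unfold Rabs. destruct Rcase_abs; intros; simpl; lra. }
  exists (Rabs (tent sg tau P t)). split; [apply Rabs_pos_lt; auto|]. intros s Hs.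
  pose proof (tent_lipschitz s t). unfold tent_u2.
  destruct (Rle_dec 0 (tent sg tau P s)); destruct (Rle_dec 0 (tent sg tau P t)); auto;
    exfalso; revert H Hs Hnz; unfold Rabs; repeat destruct Rcase_abs; intros; lra.
Qed.

End Tent.

Lemma tent_admissible sg tau P lam y0 T' : sg * sg = 1 -> 0 <= tau <= T' -> Rabs lam <= 1 ->
  admissible T' (tent sg tau P)
    (fun t => y0 + lam * (tent_area sg tau P t - tent_area sg tau P 0))
    (tent_u1 sg tau) (tent_u2 sg tau P lam).
Proof.
  intros Hsg Htau Hlam.
  set (B := Rabs (tent sg tau P 0) + T').
  assert (HB : forall r, 0 <= r <= T' -> Rabs (tent sg tau P r) <= B).
  { intros r Hr. pose proof (tent_lipschitz sg tau P Hsg r 0).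
    pose proof (Rabs_triang_inv (tent sg tau P r) (tent sg tau P 0)).
    rewrite Rminus_0_r, (Rabs_right r) in H by lra. unfold B. lra. }
  assert (HB0 : 0 <= B) by (unfold B; pose proof (Rabs_pos (tent sg tau P 0)); lra).
  repeat split; [lra| | | | | |].
  - apply (lipschitz_abs_cont_ab 0 T' 1); [lra|]. intros s t _ _.
    rewrite Rmult_1_l. apply tent_lipschitz; auto.
  - apply (lipschitz_abs_cont_ab 0 T' (Rabs lam * B)); [pose proof (Rabs_pos lam); nra|].
    intros s t Hs Ht.
    replace (y0 + lam * (tent_area sg tau P s - tent_area sg tau P 0) -
             (y0 + lam * (tent_area sg tau P t - tent_area sg tau P 0)))
      with (lam * (tent_area sg tau P s - tent_area sg tau P t)) by ring.
    rewrite Rabs_mult, Rmult_assoc. apply Rmult_le_compat_l; [apply Rabs_pos|].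
    apply (tent_area_lipschitz sg tau P Hsg 0 T'); auto.
  - apply tent_u1_measurable.
  - apply tent_u2_measurable; auto.
  - exists (fun t => In t nil). split; [apply null_set_list|]. intros t _ _.
    unfold tent_u1, tent_u2. split.
    + destruct (Rlt_dec t tau); [|rewrite Rabs_Ropp]; rewrite Rabs_sign; auto; lra.
    + destruct (Rle_dec 0 (tent sg tau P t)); [|rewrite Rabs_Ropp]; auto.
  - exists (fun t => In t (tau :: nil)). split; [apply null_set_list|]. intros t _ Hn _.
    assert (t <> tau) by (intro; apply Hn; left; auto).
    split.
    + rewrite Rmult_1_r, Rmult_0_r, Rplus_0_r. apply tent_derive; auto.
    + eapply (derivable_pt_lim_near
                (fun s => lam * tent_area sg tau P s + (y0 - lam * tent_area sg tau P 0)) _ _ _ _ 1);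
        [lra| |apply derivable_pt_lim_scal_plus, tent_area_derive; auto|].
      * intros; ring.
      * unfold tent_u2. destruct (Rle_dec 0 (tent sg tau P t));
          [rewrite Rabs_right by lra|rewrite Rabs_left by lra]; ring.
Qed.

Lemma tent_area_total x0 x1 A T' sg :
  (sg = 1 /\ 0 <= x0 + x1) \/ (sg = -1 /\ x0 + x1 < 0) ->
  Rabs x0 <= A -> Rabs x1 <= A -> 2 * A <= T' ->
  T' * T' / 4 <= sg * (2 * half_signed_sq (x0 + sg * ((T' + sg * (x1 - x0)) / 2))
                       - half_signed_sq x0 - half_signed_sq x1).
Proof.
  intros Hsg H0 H1 HT. apply Rabs_le_bounds in H0, H1.
  destruct Hsg as [[-> Hs]|[-> Hs]].
  - replace (x0 + 1 * ((T' + 1 * (x1 - x0)) / 2)) with ((T' + x0 + x1) / 2) by field.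
    unfold half_signed_sq. rewrite (Rabs_right ((T' + x0 + x1) / 2)) by lra.
    destruct (Rle_dec 0 x0); destruct (Rle_dec 0 x1);
    [rewrite (Rabs_right x0), (Rabs_right x1) by lra
    |rewrite (Rabs_right x0), (Rabs_left x1) by lra
    |rewrite (Rabs_left x0), (Rabs_right x1) by lra
    |lra]; nra.
  - replace (x0 + -1 * ((T' + -1 * (x1 - x0)) / 2)) with ((x0 + x1 - T') / 2) by field.
    unfold half_signed_sq. rewrite (Rabs_left ((x0 + x1 - T') / 2)) by lra.
    destruct (Rle_dec 0 x0); destruct (Rle_dec 0 x1);
    [lra
    |rewrite (Rabs_right x0), (Rabs_left x1) by lra
    |rewrite (Rabs_left x0), (Rabs_right x1) by lra
    |rewrite (Rabs_left x0), (Rabs_left x1) by lra]; nra.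
Qed.

Lemma tent_competitor x0 x1 y0 Y A T' :
  0 < A -> Rabs x0 <= A -> Rabs x1 <= A -> 2 * A <= T' -> Rabs Y <= T' * T' / 4 ->
  exists x' y' v1 v2, admissible T' x' y' v1 v2 /\
    x' 0 = x0 /\ y' 0 = y0 /\ x' T' = x1 /\ y' T' = y0 + Y.
Proof.
  intros HA H0 H1 HT HY.
  set (sg := if Rle_dec 0 (x0 + x1) then 1 else -1).
  assert (Hsgc : (sg = 1 /\ 0 <= x0 + x1) \/ (sg = -1 /\ x0 + x1 < 0))
    by (unfold sg; destruct (Rle_dec 0 (x0 + x1)); [left|right]; split; auto; lra).
  assert (Hsg : sg * sg = 1) by (destruct Hsgc as [[-> _]|[-> _]]; ring).
  set (tau := (T' + sg * (x1 - x0)) / 2).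
  assert (Htau : 0 <= tau <= T').
  { apply Rabs_le_bounds in H0, H1. unfold tau.
    destruct Hsgc as [[-> _]|[-> _]]; split; lra. }
  set (P := x0 + sg * tau).
  assert (Hx0 : tent sg tau P 0 = x0) by (unfold tent, P; rewrite Rabs_left1 by lra; ring).
  assert (Hx1 : tent sg tau P T' = x1).
  { unfold tent, P. rewrite Rabs_right by lra. unfold tau.
    replace (x0 + sg * ((T' + sg * (x1 - x0)) / 2) - sg * (T' - (T' + sg * (x1 - x0)) / 2))
      with (x0 + (sg * sg) * (x1 - x0)) by field. rewrite Hsg. ring. }
  set (K := tent_area sg tau P T' - tent_area sg tau P 0).
  assert (HK : T' * T' / 4 <= K).
  { unfold K. rewrite tent_area_after by lra. unfold tent_area.
    destruct (Rle_dec 0 tau); [|lra]. rewrite Hx0, Hx1. unfold P, tau.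
    pose proof (tent_area_total x0 x1 A T' sg Hsgc H0 H1 HT). lra. }
  assert (HKpos : 0 < K) by nra.
  set (lam := Y / K).
  assert (Hlam : Rabs lam <= 1).
  { unfold lam, Rdiv. rewrite Rabs_mult, Rabs_inv, (Rabs_right K) by lra.
    apply (Rmult_le_reg_r K); auto. rewrite Rmult_assoc, Rinv_l by lra. lra. }
  exists (tent sg tau P), (fun t => y0 + lam * (tent_area sg tau P t - tent_area sg tau P 0)),
    (tent_u1 sg tau), (tent_u2 sg tau P lam).
  split; [apply tent_admissible; auto|].
  repeat split; auto; [ring|]. fold K. unfold lam. field. lra.
Qed.

(** * Two full arcs are not time-optimal *)

Lemma admissible_y_increment_le T x y u1 u2 c d G M :
  admissible T x y u1 u2 -> 0 <= c <= d -> d <= T -> 0 <= M -> lipschitz_on c d M G ->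
  (forall t, c < t < d -> exists e, derivable_pt_lim G t e /\ Rabs (x t) <= e) ->
  Rabs (y d - y c) <= G d - G c.
Proof.
  intros [_ [_ [Hyac [_ [_ [Hbnd Hder]]]]]] Hcd HdT HM HG HGd.
  destruct (ae_on_and _ _ _ Hbnd Hder) as [N [HN HNP]].
  apply (Rabs_increment_le_of_derive_le c d y G M N); [lra| |auto|auto|auto|].
  { apply (abs_cont_on_restrict T); auto; lra. }
  intros t Ht Hn. destruct (HNP t ltac:(lra) Hn) as [[_ Hu2] Hd].
  destruct (HGd t Ht) as [e [HGe Hxe]].
  exists (u1 t * 0 + u2 t * x t), e. split; [apply Hd; lra|split; auto].
  rewrite Rmult_0_r, Rplus_0_l, Rabs_mult.
  pose proof (Rabs_pos (u2 t)). pose proof (Rabs_pos (x t)). nra.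
Qed.

Lemma admissible_y_increment_le_bound T x y u1 u2 A c d :
  admissible T x y u1 u2 -> 0 <= A -> 0 <= c <= d -> d <= T ->
  (forall t, c <= t <= d -> Rabs (x t) <= A) -> Rabs (y d - y c) <= A * (d - c).
Proof.
  intros Had HA Hcd HdT HxA.
  set (G := fun s => 0 * s * s + A * s + 0).
  replace (A * (d - c)) with (G d - G c) by (unfold G; ring).
  apply (admissible_y_increment_le T x y u1 u2 c d G A); auto.
  - intros s t _ _. unfold G.
    replace (0 * s * s + A * s + 0 - (0 * t * t + A * t + 0)) with (A * (s - t)) by ring.
    rewrite Rabs_mult, Rabs_right by lra. lra.
  - intros t Ht. exists (2 * 0 * t + A). split; [apply derivable_pt_lim_quadratic|].
    rewrite HxA by lra. lra.
Qed.

Definition full_arc (x : R -> R) (A a b : R) : Prop :=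
  b = a + A /\
  ((forall t, a <= t <= b -> Rabs (x t) = t - a) \/ (forall t, a <= t <= b -> Rabs (x t) = b - t)).

Lemma admissible_y_increment_full_arc T x y u1 u2 A a b :
  admissible T x y u1 u2 -> 0 <= A -> 0 <= a -> b <= T -> full_arc x A a b ->
  Rabs (y b - y a) <= A * A / 2.
Proof.
  intros Had HA Ha Hb [-> Hx].
  destruct Hx as [Hx|Hx].
  - set (G := fun s => (1/2) * s * s + (- a) * s + a * a / 2).
    replace (A * A / 2) with (G (a + A) - G a) by (unfold G; field).
    apply (admissible_y_increment_le T x y u1 u2 a (a + A) G A); auto; try lra.
    + intros s t Hs Ht. unfold G.
      replace ((1/2) * s * s + (- a) * s + a * a / 2 - ((1/2) * t * t + (- a) * t + a * a / 2))
        with (((s + t) / 2 - a) * (s - t)) by field.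
      rewrite Rabs_mult. apply Rmult_le_compat_r; [apply Rabs_pos|]. apply Rabs_le. lra.
    + intros t Ht. exists (2 * (1/2) * t + - a). split; [apply derivable_pt_lim_quadratic|].
      rewrite Hx by lra. lra.
  - set (G := fun s => (-1/2) * s * s + (a + A) * s + 0).
    replace (A * A / 2) with (G (a + A) - G a) by (unfold G; field).
    apply (admissible_y_increment_le T x y u1 u2 a (a + A) G A); auto; try lra.
    + intros s t Hs Ht. unfold G.
      replace ((-1/2) * s * s + (a + A) * s + 0 - ((-1/2) * t * t + (a + A) * t + 0))
        with (((a + A) - (s + t) / 2) * (s - t)) by field.
      rewrite Rabs_mult. apply Rmult_le_compat_r; [apply Rabs_pos|]. apply Rabs_le. lra.
    + intros t Ht. exists (2 * (-1/2) * t + (a + A)). split; [apply derivable_pt_lim_quadratic|].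
      rewrite Hx by lra. lra.
Qed.

Lemma two_full_arcs_not_time_minimizer T x y u1 u2 A a1 b1 a2 b2 :
  admissible T x y u1 u2 -> 0 < A -> (forall t, 0 <= t <= T -> Rabs (x t) <= A) ->
  0 <= a1 -> b1 <= a2 -> b2 < T -> full_arc x A a1 b1 -> full_arc x A a2 b2 ->
  ~ time_minimizer T x y.
Proof.
  intros Had HA HxA Ha1 Hb1 Hb2 F1 F2 Hmin.
  pose proof F1 as [E1 _]. pose proof F2 as [E2 _].
  assert (HT : 2 * A < T) by lra.
  assert (Hbound : forall c d, 0 <= c <= d -> d <= T -> Rabs (y d - y c) <= A * (d - c))
    by (intros c d Hc Hd; apply (admissible_y_increment_le_bound T x y u1 u2); auto; try lra;
        intros t Ht; apply HxA; lra).
  assert (HY : Rabs (y T - y 0) <= A * T - A * A).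
  { pose proof (Hbound 0 a1 ltac:(lra) ltac:(lra)).
    pose proof (admissible_y_increment_full_arc T x y u1 u2 A a1 b1 Had ltac:(lra) Ha1 ltac:(lra) F1).
    pose proof (Hbound b1 a2 ltac:(lra) ltac:(lra)).
    pose proof (admissible_y_increment_full_arc T x y u1 u2 A a2 b2 Had ltac:(lra) ltac:(lra) ltac:(lra) F2).
    pose proof (Hbound b2 T ltac:(lra) ltac:(lra)).
    pose proof (Rabs_triang (y a1 - y 0) (y b1 - y a1)).
    pose proof (Rabs_triang (y a1 - y 0 + (y b1 - y a1)) (y a2 - y b1)).
    pose proof (Rabs_triang (y a1 - y 0 + (y b1 - y a1) + (y a2 - y b1)) (y b2 - y a2)).
    pose proof (Rabs_triang (y a1 - y 0 + (y b1 - y a1) + (y a2 - y b1) + (y b2 - y a2)) (y T - y b2))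
      as Hsum.
    replace (y a1 - y 0 + (y b1 - y a1) + (y a2 - y b1) + (y b2 - y a2) + (y T - y b2))
      with (y T - y 0) in Hsum by ring.
    nra. }
  set (e := (T - 2 * A) * (T - 2 * A) / (2 * T)).
  assert (HeT : e * (2 * T) = (T - 2 * A) * (T - 2 * A)) by (unfold e; field; lra).
  assert (He : 0 < e) by (unfold e; apply Rdiv_lt_0_compat; nra).
  assert (HT' : 2 * A <= T - e) by nra.
  assert (HYe : Rabs (y T - y 0) <= (T - e) * (T - e) / 4) by nra.
  destruct (tent_competitor (x 0) (x T) (y 0) (y T - y 0) A (T - e) HA
             (HxA 0 ltac:(lra)) (HxA T ltac:(lra)) HT' HYe)
    as [x' [y' [v1 [v2 [Hadm [E0 [E0' [ET ET']]]]]]]].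
  pose proof (Hmin (T - e) x' y' v1 v2 Hadm E0 E0' ET ltac:(rewrite ET'; ring)). lra.
Qed.

(** * Arcs of a regular bang-bang extremal *)

Lemma regular_on_glue x p q a b c d :
  regular_on x p q a b -> regular_on x p q c d -> c < b -> a < d ->
  regular_on x p q (Rmin a c) (Rmax b d).
Proof.
  intros Hab Hcd Hcb Had t [Ht1 Ht2].
  destruct (Rlt_dec a t); destruct (Rlt_dec t b); [apply Hab; lra| | |];
    apply Hcd; revert Ht1 Ht2; unfold Rmin, Rmax; repeat destruct Rle_dec; intros; lra.
Qed.

Lemma maximal_regular_arc_absorbs T x p q a b c d :
  maximal_regular_arc T x p q a b -> regular_on x p q c d -> 0 <= c -> d <= T ->
  c < b -> a < d -> a <= c /\ d <= b.
Proof.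
  intros [Ha [Hab [Hb [Hreg Hmax]]]] Hcd Hc Hd Hcb Had.
  pose proof (Rmin_l a c). pose proof (Rmin_r a c). pose proof (Rmax_l b d). pose proof (Rmax_r b d).
  destruct (classic ((Rmin a c, Rmax b d) = (a, b))) as [E|E].
  - injection E as E1 E2. lra.
  - exfalso. apply (Hmax (Rmin a c) (Rmax b d)); auto.
    + apply Rmin_glb; lra.
    + apply Rmax_lub; lra.
    + apply regular_on_glue; auto.
Qed.

Lemma maximal_regular_arcs_disjoint T x p q a b a' b' :
  maximal_regular_arc T x p q a b -> maximal_regular_arc T x p q a' b' -> (a, b) <> (a', b') ->
  b <= a' \/ b' <= a.
Proof.
  intros M M' Hne. apply NNPP. intro Hn.
  pose proof M as [_ [_ [_ [Hreg _]]]]. pose proof M' as [Ha' [_ [Hb' [Hreg' _]]]].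
  pose proof M as [Ha [_ [Hb _]]].
  destruct (maximal_regular_arc_absorbs T x p q a b a' b' M Hreg' Ha' Hb' ltac:(lra) ltac:(lra)).
  destruct (maximal_regular_arc_absorbs T x p q a' b' a b M' Hreg Ha Hb ltac:(lra) ltac:(lra)).
  apply Hne. f_equal; lra.
Qed.

Section ExtremalArcs.
Variables (T c l0 : R) (x p q u1 : R -> R).
Hypothesis q_const : forall t, 0 <= t <= T -> q t = c.
Hypothesis p_cont : continuous_on T p.
Hypothesis x_ac : abs_cont_on T x.
Hypothesis energy_const : forall t, 0 <= t <= T -> Rabs (p t) + Rabs c * Rabs (x t) = l0.
Hypothesis bang_ae :
  ae_on T (fun t => 0 < t < T -> derivable_pt_lim x t (u1 t) /\ u1 t * p t = Rabs (p t)).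

Lemma regular_on_phi_neq_0 a b t : regular_on x p q a b -> 0 <= a -> b <= T -> a < t < b ->
  c <> 0 /\ p t <> 0 /\ x t <> 0.
Proof.
  intros Hreg Ha Hb Ht. destruct (Hreg t Ht) as [Hp Hq]. unfold phi1, phi2 in *.
  rewrite q_const in Hq by lra.
  repeat split; auto; intro E; apply Hq; rewrite E; ring.
Qed.

Lemma Rabs_x_le t : c <> 0 -> 0 <= t <= T -> Rabs (x t) <= l0 / Rabs c.
Proof.
  intros Hc Ht. assert (Hc' : 0 < Rabs c) by (apply Rabs_pos_lt; auto).
  pose proof (energy_const t Ht). pose proof (Rabs_pos (p t)).
  apply (Rmult_le_reg_l (Rabs c)); auto. field_simplify; lra.
Qed.

Lemma Rabs_x_switch t : c <> 0 -> 0 <= t <= T -> p t = 0 -> Rabs (x t) = l0 / Rabs c.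
Proof.
  intros Hc Ht Hp. assert (Hc' : 0 < Rabs c) by (apply Rabs_pos_lt; auto).
  pose proof (energy_const t Ht). rewrite Hp, Rabs_R0 in H. rewrite <- H. field. lra.
Qed.

Lemma regular_near t : 0 < t < T -> c <> 0 -> p t <> 0 -> x t <> 0 ->
  exists r, 0 < r /\ 0 <= t - r /\ t + r <= T /\ regular_on x p q (t - r) (t + r).
Proof.
  intros Ht Hc Hp Hx.
  destruct (continuous_on_nonzero_near T p t p_cont ltac:(lra) Hp) as [d1 [Hd1 H1]].
  destruct (continuous_on_nonzero_near T x t (abs_cont_continuous_on T x x_ac) ltac:(lra) Hx)
    as [d2 [Hd2 H2]].
  set (r := Rmin (Rmin d1 d2) (Rmin t (T - t))).
  pose proof (Rmin_l (Rmin d1 d2) (Rmin t (T - t))). pose proof (Rmin_r (Rmin d1 d2) (Rmin t (T - t))).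
  pose proof (Rmin_l d1 d2). pose proof (Rmin_r d1 d2).
  pose proof (Rmin_l t (T - t)). pose proof (Rmin_r t (T - t)).
  assert (Hr : 0 < r) by (unfold r; repeat apply Rmin_pos; lra).
  exists r. fold r in H, H0. repeat split; try lra.
  - apply H1; [lra|apply Rabs_def1; lra].
  - unfold phi2. rewrite q_const by lra. apply Rmult_integral_contrapositive_currified; auto.
    apply H2; [lra|apply Rabs_def1; lra].
Qed.

Lemma maximal_regular_arc_end_switch a b t : maximal_regular_arc T x p q a b ->
  t = a \/ t = b -> 0 < t < T -> p t = 0 \/ x t = 0.
Proof.
  intros M Hab Ht. pose proof M as [Ha [Hlt [Hb [Hreg _]]]].
  destruct (regular_on_phi_neq_0 a b ((a + b) / 2) Hreg Ha Hb ltac:(lra)) as [Hc _].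
  apply NNPP. intro Hn.
  destruct (regular_near t Ht Hc ltac:(tauto) ltac:(tauto)) as [r [Hr [Hr0 [HrT Hreg']]]].
  destruct (maximal_regular_arc_absorbs T x p q a b (t - r) (t + r) M Hreg' Hr0 HrT);
    lra.
Qed.

Lemma regular_arc_linear a b : regular_on x p q a b -> 0 <= a -> a < b -> b <= T ->
  exists sg, sg * sg = 1 /\ forall t, a <= t <= b -> x t = x a + sg * (t - a).
Proof.
  intros Hreg Ha Hab Hb. set (m := (a + b) / 2).
  assert (Hnz : forall t, a < t < b -> p t <> 0)
    by (intros t Ht; apply (regular_on_phi_neq_0 a b t); auto).
  pose proof (continuous_on_sign_const T p a b p_cont Ha Hb Hnz) as Hsign.
  set (sg := if Rlt_dec 0 (p m) then 1 else -1).
  exists sg. split; [unfold sg; destruct Rlt_dec; ring|].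
  destruct bang_ae as [N [HN Hbang]].
  assert (Hu1 : forall t, a < t < b -> ~ N t -> derivable_pt_lim x t sg).
  { intros t Ht Hn. destruct (Hbang t ltac:(lra) Hn ltac:(lra)) as [Hd Hu].
    replace sg with (u1 t); auto.
    pose proof (Hsign m t ltac:(unfold m; lra) Ht). pose proof (Hnz t Ht).
    apply (Rmult_eq_reg_r (p t)); auto. rewrite Hu. unfold sg.
    destruct (Rlt_dec 0 (p m)); [rewrite Rabs_right|rewrite Rabs_left]; nra. }
  intros t Ht.
  assert (Rabs ((1 * x t + - sg * t) - (1 * x a + - sg * a)) <= (fun _ => 0) t - (fun _ => 0) a).
  { apply (Rabs_increment_le_of_derive_le a t (fun s => 1 * x s + - sg * s) (fun _ => 0) 0 N);
      auto; try lra.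
    - apply abs_cont_ab_affine, (abs_cont_on_restrict T); auto; lra.
    - intros s s' _ _. rewrite Rminus_diag, Rabs_R0. lra.
    - intros s Hs Hn. exists 0, 0. repeat split.
      + apply (derivable_pt_lim_near (fun s => x s - (0 * s * s + sg * s + 0)) _ _ (sg - (2 * 0 * s + sg))
                 _ 1); [lra| |apply derivable_pt_lim_minus; [apply Hu1; auto; lra|apply derivable_pt_lim_quadratic]|ring].
        intros; ring.
      + apply derivable_pt_lim_const.
      + rewrite Rabs_R0. lra. }
  apply Rabs_le_bounds in H. lra.
Qed.

Lemma maximal_regular_arc_full a b : maximal_regular_arc T x p q a b -> b < T ->
  (0 < a \/ x a = 0) -> full_arc x (l0 / Rabs c) a b.
Proof.
  intros M HbT Hstart. pose proof M as [Ha [Hab [Hb [Hreg _]]]].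
  set (m := (a + b) / 2).
  destruct (regular_on_phi_neq_0 a b m Hreg Ha Hb ltac:(unfold m; lra)) as [Hc [_ Hxm]].
  destruct (regular_arc_linear a b Hreg Ha Hab Hb) as [sg [Hsg Hlin]].
  assert (Habs := Rabs_sign sg Hsg).
  assert (Hsg0 : sg <> 0) by (intro E; rewrite E in Hsg; lra).
  destruct (maximal_regular_arc_end_switch a b b M (or_intror eq_refl) ltac:(lra)) as [Hpb|Hxb].
  - (* [p a = 0] as well would give [|x a| = |x b|], so the linear [x] would vanish at [m] *)
    assert (Hxa : x a = 0).
    { destruct Hstart as [Ha0|]; auto.
      destruct (maximal_regular_arc_end_switch a b a M (or_introl eq_refl) ltac:(lra)) as [Hpa|]; auto.
      exfalso. apply Hxm.
      pose proof (Rabs_x_switch a Hc ltac:(lra) Hpa). pose proof (Rabs_x_switch b Hc ltac:(lra) Hpb).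
      rewrite Hlin in * by (unfold m; lra). rewrite <- H in H0. unfold m.
      revert H0. unfold Rabs. repeat destruct Rcase_abs; intros; try nra. }
    pose proof (Rabs_x_switch b Hc ltac:(lra) Hpb). rewrite Hlin, Hxa in H by lra.
    rewrite Rplus_0_l, Rabs_mult, Habs, Rabs_right in H by lra.
    split; [lra|left]. intros t Ht. rewrite Hlin, Hxa, Rplus_0_l, Rabs_mult, Habs, Rabs_right by lra.
    ring.
  - assert (Hxt : forall t, a <= t <= b -> x t = sg * (t - b))
      by (intros t Ht; rewrite Hlin in Hxb |- * by lra; lra).
    assert (Hpa : p a = 0).
    { destruct Hstart as [Ha0|Hxa].
      - destruct (maximal_regular_arc_end_switch a b a M (or_introl eq_refl) ltac:(lra)) as [|Hxa];
          auto.
        exfalso. rewrite Hxt in Hxa by lra. apply Rmult_integral in Hxa. lra.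
      - exfalso. rewrite Hxt in Hxa by lra. apply Rmult_integral in Hxa. lra. }
    pose proof (Rabs_x_switch a Hc ltac:(lra) Hpa). rewrite Hxt in H by lra.
    rewrite Rabs_mult, Habs, Rabs_left1 in H by lra.
    split; [lra|right]. intros t Ht. rewrite Hxt, Rabs_mult, Habs, Rabs_left1 by lra. ring.
Qed.

End ExtremalArcs.

Lemma Rabs_le_1_mult_le u z : Rabs u <= 1 -> u * z <= Rabs z.
Proof. intros Hu. apply Rabs_le_bounds in Hu. unfold Rabs. destruct Rcase_abs; nra. Qed.

Lemma extremal_q_const T x y u1 u2 p q : extremal T x y u1 u2 p q ->
  forall t, 0 <= t <= T -> q t = q 0.
Proof.
  intros [_ [_ [Hqac [_ [[N [HN Hder]] _]]]]] t Ht.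
  assert (Rabs (q t - q 0) <= (fun _ => 0) t - (fun _ => 0) 0); [|apply Rabs_le_bounds in H; lra].
  apply (Rabs_increment_le_of_derive_le 0 t q (fun _ => 0) 0 N); try lra; auto.
  - apply (abs_cont_on_restrict T); auto; lra.
  - intros s s' _ _. rewrite Rminus_diag, Rabs_R0. lra.
  - intros s Hs Hn. exists (- 0), 0. repeat split.
    + apply (Hder s ltac:(lra) Hn ltac:(lra)).
    + apply derivable_pt_lim_const.
    + rewrite Ropp_0, Rabs_R0. lra.
Qed.

Lemma extremal_bang_ae T x y u1 u2 p q : extremal T x y u1 u2 p q ->
  ae_on T (fun t => 0 < t < T -> derivable_pt_lim x t (u1 t) /\ u1 t * p t = Rabs (p t)).
Proof.
  intros [[_ [_ [_ [_ [_ [Hbnd Hxder]]]]]] [_ [_ [_ [_ [l0 [_ Hham]]]]]]].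
  destruct (ae_on_and _ _ _ Hbnd (ae_on_and _ _ _ Hxder Hham)) as [N [HN HP]].
  exists N. split; auto. intros t Ht Hn Ht'.
  destruct (HP t Ht Hn) as [[Hu1 Hu2] [Hd [Hh Habs]]]. unfold phi1, phi2 in *.
  split; [rewrite <- (Rplus_0_r (u1 t)), <- (Rmult_0_r (u2 t)), <- (Rmult_1_r (u1 t)); apply Hd; auto|].
  pose proof (Rabs_le_1_mult_le (u1 t) (p t) Hu1).
  pose proof (Rabs_le_1_mult_le (u2 t) (q t * x t) Hu2). lra.
Qed.

Lemma extremal_energy_const T x y u1 u2 p q : extremal T x y u1 u2 p q -> 0 < T ->
  forall t, 0 <= t <= T ->
    Rabs (p t) + Rabs (q 0) * Rabs (x t) = Rabs (p 0) + Rabs (q 0) * Rabs (x 0).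
Proof.
  intros Hext HT t Ht. pose proof (extremal_q_const T x y u1 u2 p q Hext) as Hq.
  destruct Hext as [[_ [Hxac _]] [Hpac [_ [_ [_ [l0 [_ Hham]]]]]]].
  assert (Hl0 : forall s, 0 <= s <= T -> Rabs (p s) + Rabs (q 0) * Rabs (x s) = l0).
  { apply ae_on_continuous_eq; auto.
    - apply continuous_on_abs_comb; apply abs_cont_continuous_on; auto.
    - destruct Hham as [N [HN HP]]. exists N. split; auto. intros s Hs Hn.
      destruct (HP s Hs Hn) as [_ Habs]. unfold phi1, phi2 in Habs.
      rewrite Hq, Rabs_mult in Habs by auto. auto. }
  rewrite !Hl0 by lra. auto.
Qed.

(* The two ends of such an arc are switching times (or [x] vanishes at its start), which makes it
   a full arc; only an arc reaching the final time or starting at time [0] can escape this. *)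
Definition determined_arc (T : R) (x : R -> R) (e : R * R) : Prop :=
  snd e < T /\ (0 < fst e \/ x (fst e) = 0).

Lemma regular_bang_bang_full_arcs T x y u1 u2 p q arcs e0 :
  regular_bang_bang T x y u1 u2 p q arcs -> In e0 arcs ->
  exists A, 0 < A /\ (forall t, 0 <= t <= T -> Rabs (x t) <= A) /\
    forall e, In e arcs -> determined_arc T x e -> full_arc x A (fst e) (snd e).
Proof.
  intros [Hext [_ [Hall _]]] He0. rewrite Forall_forall in Hall.
  pose proof (Hall e0 He0) as [Ha [Hab [Hb [Hreg _]]]].
  set (c := q 0). set (l0 := Rabs (p 0) + Rabs c * Rabs (x 0)).
  pose proof (extremal_q_const T x y u1 u2 p q Hext) as Hq.
  pose proof (extremal_energy_const T x y u1 u2 p q Hext ltac:(lra)) as Hen.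
  pose proof (extremal_bang_ae T x y u1 u2 p q Hext) as Hbang.
  destruct Hext as [[_ [Hxac _]] [Hpac _]].
  assert (Hpc := abs_cont_continuous_on T p Hpac).
  set (m := (fst e0 + snd e0) / 2).
  destruct (regular_on_phi_neq_0 T c x p q Hq (fst e0) (snd e0) m Hreg Ha Hb ltac:(unfold m; lra))
    as [Hc [_ Hxm]].
  exists (l0 / Rabs c). split; [|split].
  - pose proof (Rabs_pos_lt _ Hxm).
    pose proof (Rabs_x_le T c l0 x p Hen m Hc ltac:(unfold m; lra)). lra.
  - intros t Ht. apply (Rabs_x_le T c l0 x p Hen t Hc Ht).
  - intros e1 He1 [HeT Hstart].
    apply (maximal_regular_arc_full T c l0 x p q u1 Hq Hpc Hxac Hen Hbang); auto.
Qed.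

(** * Counting arcs *)

Definition at_most_one {A : Type} (P : A -> Prop) (l : list A) : Prop :=
  forall e e', In e l -> In e' l -> P e -> P e' -> e = e'.

Lemma at_most_one_cons {A : Type} (P : A -> Prop) a l : at_most_one P (a :: l) -> at_most_one P l.
Proof. intros H e e' He He'. apply H; right; auto. Qed.

Lemma NoDup_length_le_cover {A : Type} (Bs : list (A -> Prop)) (l : list A) :
  NoDup l -> (forall e, In e l -> Exists (fun B => B e) Bs) ->
  Forall (fun B => at_most_one B l) Bs -> (length l <= length Bs)%nat.
Proof.
  revert Bs. induction l as [|a l IH]; intros Bs Hnd Hcov Hamo; simpl; [lia|].
  inversion Hnd as [|? ? Ha Hnd']; subst.
  destruct (proj1 (Exists_exists _ _) (Hcov a (or_introl eq_refl))) as [B [HB Ba]].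
  destruct (in_split B Bs HB) as [Bs1 [Bs2 ->]].
  apply Forall_app in Hamo as [Hamo1 HamoB2]. apply Forall_cons_iff in HamoB2 as [HamoB Hamo2].
  assert (length l <= length (Bs1 ++ Bs2))%nat; [|rewrite length_app in *; simpl; lia].
  apply IH; auto.
  - intros e He. specialize (Hcov e (or_intror He)).
    rewrite Exists_app, Exists_cons in Hcov. rewrite Exists_app.
    destruct Hcov as [|[Be|]]; auto. exfalso. apply Ha.
    rewrite (HamoB a e (or_introl eq_refl) (or_intror He) Ba Be). auto.
  - apply Forall_app. split; eapply Forall_impl; try eassumption; intros B' HB'; exact (at_most_one_cons B' a l HB').
Qed.

Lemma maximal_regular_arcs_start_at_most_one T x p q arcs :
  Forall (fun e => maximal_regular_arc T x p q (fst e) (snd e)) arcs ->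
  at_most_one (fun e => fst e = 0) arcs.
Proof.
  rewrite Forall_forall. intros Hall [a b] [a' b'] He He' Ha Ha'. simpl in *.
  apply NNPP. intro Hne.
  pose proof (Hall _ He) as M. pose proof (Hall _ He') as M'. simpl in *.
  pose proof M as [_ [Hab _]]. pose proof M' as [_ [Hab' _]].
  destruct (maximal_regular_arcs_disjoint T x p q a b a' b' M M' Hne); lra.
Qed.

Lemma maximal_regular_arcs_end_at_most_one T x p q arcs :
  Forall (fun e => maximal_regular_arc T x p q (fst e) (snd e)) arcs ->
  at_most_one (fun e => snd e = T) arcs.
Proof.
  rewrite Forall_forall. intros Hall [a b] [a' b'] He He' Hb Hb'. simpl in *.
  apply NNPP. intro Hne.
  pose proof (Hall _ He) as M. pose proof (Hall _ He') as M'. simpl in *.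
  pose proof M as [_ [Hab _]]. pose proof M' as [_ [Hab' _]].
  destruct (maximal_regular_arcs_disjoint T x p q a b a' b' M M' Hne); lra.
Qed.

Lemma maximal_regular_arc_cases T x p q e : maximal_regular_arc T x p q (fst e) (snd e) ->
  determined_arc T x e \/ fst e = 0 \/ snd e = T.
Proof.
  intros [Ha [_ [Hb _]]]. unfold determined_arc.
  destruct (Req_dec (fst e) 0); destruct (Req_dec (snd e) T); auto. left. split; lra.
Qed.

Lemma determined_arcs_at_most_one T x y u1 u2 p q arcs :
  regular_bang_bang T x y u1 u2 p q arcs -> time_minimizer T x y ->
  at_most_one (determined_arc T x) arcs.
Proof.
  intros Hbb Hmin [a b] [a' b'] He He' De De'. apply NNPP. intro Hne.
  destruct (regular_bang_bang_full_arcs T x y u1 u2 p q arcs (a, b) Hbb He)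
    as [A [HA [HxA Hfull]]].
  pose proof (Hfull _ He De) as F. pose proof (Hfull _ He' De') as F'.
  destruct Hbb as [[Had _] [_ [Hall _]]]. rewrite Forall_forall in Hall.
  pose proof (Hall _ He) as M. pose proof (Hall _ He') as M'.
  destruct De as [Hb _]. destruct De' as [Hb' _]. simpl in *.
  pose proof M as [Ha _]. pose proof M' as [Ha' _].
  destruct (maximal_regular_arcs_disjoint T x p q a b a' b' M M' Hne).
  - apply (two_full_arcs_not_time_minimizer T x y u1 u2 A a b a' b'); auto.
  - apply (two_full_arcs_not_time_minimizer T x y u1 u2 A a' b' a b); auto.
Qed.

Theorem mainTheorem11 :
  (forall (T : R) (x y u1 u2 p q : R -> R) (arcs : list (R * R)),
     regular_bang_bang T x y u1 u2 p q arcs ->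
     (3 < length arcs)%nat ->
     ~ time_minimizer T x y) /\
  (forall (T : R) (x y u1 u2 p q : R -> R) (arcs : list (R * R)),
     regular_bang_bang T x y u1 u2 p q arcs ->
     x 0 = 0 ->
     time_minimizer T x y ->
     (length arcs <= 2)%nat).
Proof.
  split.
  - intros T x y u1 u2 p q arcs Hbb Hlen Hmin.
    pose proof Hbb as [_ [Hnd [Hall _]]].
    enough (length arcs <= 3)%nat by lia.
    apply (NoDup_length_le_cover
             (determined_arc T x :: (fun e => fst e = 0) :: (fun e => snd e = T) :: nil)); auto.
    + intros e He. rewrite !Exists_cons, Exists_nil. rewrite Forall_forall in Hall.
      pose proof (maximal_regular_arc_cases T x p q e (Hall e He)). tauto.
    + repeat constructor.
      * apply (determined_arcs_at_most_one T x y u1 u2 p q); auto.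
      * apply (maximal_regular_arcs_start_at_most_one T x p q); auto.
      * apply (maximal_regular_arcs_end_at_most_one T x p q); auto.
  - intros T x y u1 u2 p q arcs Hbb Hx0 Hmin.
    pose proof Hbb as [_ [Hnd [Hall _]]].
    apply (NoDup_length_le_cover (determined_arc T x :: (fun e => snd e = T) :: nil)); auto.
    + intros e He. rewrite !Exists_cons, Exists_nil. rewrite Forall_forall in Hall.
      pose proof (Hall e He) as [_ [_ [HeT _]]].
      destruct (maximal_regular_arc_cases T x p q e (Hall e He)) as [|[Hs|]]; auto.
      destruct (Req_dec (snd e) T); auto. left. split; [lra|right; rewrite Hs; auto].
    + repeat constructor.
      * apply (determined_arcs_at_most_one T x y u1 u2 p q); auto.
      * apply (maximal_regular_arcs_end_at_most_one T x p q); auto.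
Qed.
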